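(* Let $m\in\mathbb{N}$ and let $A$ be a finite (nonempty) sequence of positive integers. If $A$ is an $m$-palindrome, then the concatenation $A^2=AA$ is an $m$-palindrome.
   Context: For a finite sequence $(c_0,\dots,c_k)$ of positive integers, $[c_0,\dots,c_k]$ denotes the value of the finite continued fraction $c_0+\cfrac{1}{c_1+\cfrac{1}{\ddots+\cfrac{1}{c_k}}}$. A finite sequence $(c_0,\dots,c_k)$ of positive integers is an $m$-palindrome ($m\in\mathbb{N}$) if $[c_0,\dots,c_k]=m\,[c_k,\dots,c_0]$. *)

From mathcomp Require Import all_boot all_order all_algebra.
Set Implicit Arguments. Unset Strict Implicit. Unset Printing Implicit Defensive.
Import Order.TTheory GRing.Theory Num.Theory.
Local Open Scope ring_scope.

(* Value of the finite continued fraction [c_0, ..., c_k] as a rational.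
   cf [:: c] = c, cf (c :: s) = c + 1 / cf s for s nonempty.
   (The empty sequence gets the dummy value 0; it never arises in the
   statement since sequences are required to be nonempty.) *)
Fixpoint cf (s : seq nat) : rat :=
  match s with
  | [::] => 0
  | [:: c] => c%:R
  | c :: t => c%:R + (cf t)^-1
  end.

Definition posseq (s : seq nat) : bool := (s != [::]) && all (fun c => 0 < c)%N s.

Definition m_palindrome (m : nat) (s : seq nat) : Prop :=
  cf s = m%:R * cf (rev s).

From mathcomp Require Import all_boot all_order all_algebra.
From mathcomp Require Import ring.
Import Order.TTheory GRing.Theory Num.Theory.
Local Open Scope ring_scope.

(* Write [cf_mat s] for the product of the matrices [[c, 1], [1, 0]] over c in s.
   If cf_mat A = [[a, b], [c, d]] then [A] = a / c; as the factors are
   symmetric, cf_mat (rev A) is the transpose, so [rev A] = a / b.  Squaring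
   the matrix gives [AA] / [rev AA] = b / c = [A] / [rev A]: the ratio m of an
   m-palindrome survives doubling. *)

Lemma mulmx2E (R : pzSemiRingType) (A B : 'M[R]_2) i j :
  (A *m B) i j = A i 0 * B 0 j + A i 1 * B 1 j.
Proof.
rewrite mxE big_ord_recl big_ord1.
by congr (A i _ * B _ j + A i _ * B _ j); apply: val_inj.
Qed.

Definition cf_mx (c : nat) : 'M[rat]_2 :=
  \matrix_(i, j) if (i == 0) && (j == 0) then c%:R else (i != j)%:R.

Definition cf_mat (s : seq nat) : 'M[rat]_2 := foldr (fun c M => cf_mx c *m M) 1%:M s.

Lemma tr_cf_mx c : (cf_mx c)^T = cf_mx c.
Proof. by apply/matrixP => i j; rewrite !mxE eq_sym andbC (eq_sym j). Qed.

Lemma cf_mat_cat s t : cf_mat (s ++ t) = cf_mat s *m cf_mat t.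
Proof. by elim: s => [|c s IH] /=; rewrite ?mul1mx // IH mulmxA. Qed.

Lemma cf_mat_rev s : cf_mat (rev s) = (cf_mat s)^T.
Proof.
elim: s => [|c s IH]; first by rewrite /= trmx1.
by rewrite rev_cons -cats1 cf_mat_cat IH /= mulmx1 trmx_mul tr_cf_mx.
Qed.

Lemma cf_mat_cons0 c t j : cf_mat (c :: t) 0 j = c%:R * cf_mat t 0 j + cf_mat t 1 j.
Proof. by rewrite /= mulmx2E !mxE /= mul1r. Qed.

Lemma cf_mat_cons1 c t j : cf_mat (c :: t) 1 j = cf_mat t 0 j.
Proof. by rewrite /= mulmx2E !mxE /= mul1r mul0r addr0. Qed.

Lemma cf_mat_ge0 s i j : 0 <= cf_mat s i j.
Proof.
elim: s i j => [|c s IH] i j; first by rewrite mxE ler0n.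
rewrite /= mulmx2E addr_ge0 // mulr_ge0 // mxE; by case: ifP.
Qed.

Lemma cf_mat00_gt0 s : all (fun c => 0 < c)%N s -> 0 < cf_mat s 0 0.
Proof.
elim: s => [|c s IH] /=; first by rewrite mxE.
move=> /andP[c_gt0 /IH s_gt0]; rewrite cf_mat_cons0.
by rewrite ltr_wpDr ?cf_mat_ge0 // mulr_gt0 // ltr0n.
Qed.

Lemma cf_mat10_gt0 {s} : posseq s -> 0 < cf_mat s 1 0.
Proof. by case: s => // c s /andP[_ /andP[_ /cf_mat00_gt0]]; rewrite cf_mat_cons1. Qed.

Lemma cf_matE s : posseq s -> cf s = cf_mat s 0 0 / cf_mat s 1 0.
Proof.
elim: s => // c [|d s] IH /andP[_ /andP[c_gt0 s_gt0]].
  by rewrite cf_mat_cons0 cf_mat_cons1 !mxE /= mulr1 addr0 divr1.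
have s_pos : posseq (d :: s) by [].
have -> : cf [:: c, d & s] = c%:R + (cf (d :: s))^-1 by [].
rewrite IH // invf_div (cf_mat_cons0 c) (cf_mat_cons1 c).
by field; rewrite gt_eqF // cf_mat00_gt0.
Qed.

Lemma cf_gt0 s : posseq s -> 0 < cf s.
Proof.
move=> s_pos; rewrite cf_matE // divr_gt0 ?cf_mat10_gt0 //.
by case/andP: s_pos => _ /cf_mat00_gt0.
Qed.

Lemma posseq_rev {s} : posseq s -> posseq (rev s).
Proof. by rewrite /posseq all_rev -!size_eq0 size_rev. Qed.

Lemma posseq_cat {s t} : posseq s -> posseq t -> posseq (s ++ t).
Proof.
rewrite /posseq all_cat -!size_eq0 size_cat.
by case/andP=> s_n0 -> /andP[_ ->]; rewrite addn_eq0 negb_and s_n0.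
Qed.

Lemma cf_cat_self_ratio s : posseq s ->
  cf (s ++ s) / cf (rev (s ++ s)) = cf s / cf (rev s).
Proof.
move=> s_pos; have rs_pos := posseq_rev s_pos.
have ss_pos := posseq_cat s_pos s_pos.
rewrite !cf_matE ?posseq_rev // !cf_mat_rev cf_mat_cat trmx_mul !mulmx2E !mxE.
have a_gt0 : 0 < cf_mat s 0 0 by case/andP: s_pos => _ /cf_mat00_gt0.
have b_gt0 : 0 < cf_mat s 0 1 by have := cf_mat10_gt0 rs_pos; rewrite cf_mat_rev mxE.
have c_gt0 : 0 < cf_mat s 1 0 by apply: cf_mat10_gt0.
have d_ge0 : 0 <= cf_mat s 1 1 by apply: cf_mat_ge0.
move: (cf_mat s 0 0) (cf_mat s 0 1) (cf_mat s 1 0) (cf_mat s 1 1)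
  a_gt0 b_gt0 c_gt0 d_ge0 => a b c d a_gt0 b_gt0 c_gt0 d_ge0.
have q_gt0 : 0 < a * a + b * c by rewrite addr_gt0 ?mulr_gt0.
field.
by rewrite (mulrC c b) !gt_eqF // ltr_wpDr ?mulr_ge0 ?mulr_gt0 // ltW.
Qed.

Theorem lemma3p6 (m : nat) (A : seq nat) :
  posseq A -> m_palindrome m A -> m_palindrome m (A ++ A).
Proof.
rewrite /m_palindrome => A_pos A_pal.
have revA_neq0 : cf (rev A) != 0 by rewrite gt_eqF ?cf_gt0 ?posseq_rev.
have revAA_neq0 : cf (rev (A ++ A)) != 0.
  by rewrite gt_eqF ?cf_gt0 ?posseq_rev ?posseq_cat.
by rewrite -(divfK revAA_neq0 (cf (A ++ A))) cf_cat_self_ratio // A_pal mulfK.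
Qed.
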